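(* Let $N\ge3$ and let $\|\cdot\|:\mathbb{C}^N\to\mathbb{R}$ be a norm that is permutation-invariant (i.e. $\|\mathbf{v}\|$ is unchanged by permuting the components of $\mathbf{v}$), satisfies $\|(1,1)\|\neq1$, and satisfies \[ \|\mathbf{v}+\mathbf{w}\|=\big\|\big(\|\mathbf{v}\|,\|\mathbf{w}\|\big)\big\| \] for all $\mathbf{v},\mathbf{w}\in\mathbb{C}^N$ with disjoint supports. Then there exists a real number $p\ge1$ such that for every vector $\mathbf{c}\in\mathbb{C}^N$ whose components all have rational absolute values, \[ \|\mathbf{c}\|=\Big(\sum_{i=1}^N|c_i|^p\Big)^{1/p}. \]
   Context: Vectors with fewer than $N$ entries are identified with vectors in $\mathbb{C}^N$ by padding with zeros; e.g. $(a,b)$ denotes $(a,b,0,\dots,0)\in\mathbb{C}^N$ and $(1,1)=(1,1,0,\dots,0)$. The support of a vector is the set of indices of its nonzero components. *)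

From HB Require Import structures.
From mathcomp Require Import all_boot all_order all_algebra all_fingroup.
From mathcomp Require Import complex.
From mathcomp Require Import all_classical all_reals all_analysis.
Set Implicit Arguments. Unset Strict Implicit. Unset Printing Implicit Defensive.
Import Order.TTheory GRing.Theory Num.Theory.
Local Open Scope ring_scope.

Definition cabs (R : realType) (z : R[i]) : R := ComplexField.Normc.normc z.

Section Defs.
Variables (R : realType) (N : nat).

Definition is_norm (nrm : 'rV[R[i]]_N -> R) : Prop :=
  [/\ (forall v, nrm v = 0 -> v = 0),
      (forall (a : R[i]) v, nrm (a *: v) = cabs a * nrm v) &
      (forall v w, nrm (v + w) <= nrm v + nrm w)].

Definition perm_invariant (nrm : 'rV[R[i]]_N -> R) : Prop :=
  forall (s : 'S_N) v, nrm (col_perm s v) = nrm v.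

Definition vec2 (a b : R[i]) : 'rV[R[i]]_N :=
  \row_(j < N) (if val j == 0%N then a else if val j == 1%N then b else 0).

Definition disjoint_supp (v w : 'rV[R[i]]_N) : Prop :=
  forall j, v 0 j = 0 \/ w 0 j = 0.

Definition cR (x : R) : R[i] := (x%:C)%C.

Definition is_rat (x : R) : Prop := exists q : rat, x = ratr q.
End Defs.

From HB Require Import structures.
From mathcomp Require Import all_boot all_order all_algebra all_fingroup.
From mathcomp Require Import complex.
From mathcomp Require Import all_classical all_reals all_analysis.
From mathcomp Require Import lra.
Import Order.TTheory GRing.Theory Num.Theory.
Local Open Scope ring_scope.

(* Disjoint additivity and permutation
   invariance make [nrm2] a homogeneous, associative operation on [0, +oo)
   (associativity needs three coordinates), and the norm of a vector is obtained
   by folding [nrm2] over the moduli of its entries.  Iterating [nrm2 _ 1] gives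
   a nondecreasing, multiplicative sequence [ones n], which therefore equals
   n ^ alpha with alpha = log2 |(1, 1)| in (0, 1].  Rounding the entries of a
   large multiple M v down to values of [ones] then shows that M |v| and
   M (\sum_j |v_j| ^ p) ^ (1/p), p = 1/alpha, differ by at most 2N, so they agree;
   the moduli need not be rational. *)

Lemma le0_of_bounded_mulrn (R : archiRealFieldType) (d K : R) :
  (forall k : nat, d *+ k <= K) -> d <= 0.
Proof.
move=> dK; rewrite leNgt; apply/negP => d_gt0.
have K_ge0 : 0 <= K by have := dK 0%N; rewrite mulr0n.
have /andP[_ Kk] := truncn_itv (divr_ge0 K_ge0 (ltW d_gt0)).
have := dK (Num.truncn (K / d)).+1.
by rewrite -mulr_natr -ler_pdivlMl // leNgt mulrC Kk.
Qed.

Section PowerLaw.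
Variable R : realType.

Lemma ler_of_expr_le (x y C : R) :
  0 < y -> (forall k, x ^+ k <= C * y ^+ k) -> x <= y.
Proof.
move=> y_gt0 xyC; have [x_le0|x_gt0] := lerP x 0; first exact: le_trans x_le0 (ltW y_gt0).
have C_gt0 : 0 < C by have := xyC 0%N; rewrite !expr0 mulr1; apply: lt_le_trans.
rewrite -ler_ln ?posrE // -subr_le0; apply: (@le0_of_bounded_mulrn _ _ (ln C)) => k.
rewrite mulrnBl -!lnXn // lerBlDr -lnM ?posrE ?exprn_gt0 //.
by rewrite ler_ln ?posrE ?mulr_gt0 ?exprn_gt0.
Qed.

Lemma multiplicative_expn (s : nat -> R) :
  s 1 = 1 -> {morph s : m n / (m * n)%N >-> m * n} ->
  forall n k, s (n ^ k)%N = s n ^+ k.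
Proof.
move=> s1 sM n; elim=> [|k IHk]; first by rewrite expn0 expr0.
by rewrite expnS sM IHk exprS.
Qed.

Section MonotoneMultiplicative.
Variables s t : nat -> R.
Hypotheses (s_mono : {homo s : m n / (m <= n)%N >-> m <= n})
           (t_mono : {homo t : m n / (m <= n)%N >-> m <= n}).
Hypotheses (sM : {morph s : m n / (m * n)%N >-> m * n})
           (tM : {morph t : m n / (m * n)%N >-> m * n}).
Hypotheses (s1 : s 1 = 1) (t1 : t 1 = 1) (st2 : s 2 = t 2) (s2_gt0 : 0 < s 2).

(* Compare [s n ^+ k] and [t n ^+ k] through the powers of 2 bracketing [n ^ k]. *)
Lemma mono_multiplicative_le n : (0 < n)%N -> 0 < t n -> s n <= t n.
Proof.
move=> n_gt0 tn_gt0; apply: (@ler_of_expr_le _ _ (s 2)) => // k.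
have nk_gt0 : (0 < n ^ k)%N by rewrite expn_gt0 n_gt0.
set j := trunc_log 2 (n ^ k)%N.
rewrite -(multiplicative_expn _ s1 sM) -(multiplicative_expn _ t1 tM).
apply: (@le_trans _ _ (s (2 ^ j.+1)%N)); first exact/s_mono/ltnW/trunc_log_ltn.
rewrite (multiplicative_expn _ s1 sM) exprS st2 -(multiplicative_expn _ t1 tM).
by rewrite ler_pM2l -?st2 //; apply/t_mono/trunc_logP.
Qed.

End MonotoneMultiplicative.

Lemma mono_multiplicative_powR (s : nat -> R) :
  {homo s : m n / (m <= n)%N >-> m <= n} ->
  {morph s : m n / (m * n)%N >-> m * n} -> 1 < s 2 ->
  forall n, s n = n%:R `^ (ln (s 2) / ln 2).
Proof.
move=> s_mono sM s2_gt1; set a := ln (s 2) / ln 2.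
have s2_gt0 : 0 < s 2 := lt_trans ltr01 s2_gt1.
have ln2_gt0 : 0 < ln (2 : R) by rewrite ln_gt0 ?ltr1n.
have a_gt0 : 0 < a by apply: divr_gt0 => //; apply: ln_gt0.
have s1 : s 1 = 1.
  by apply: (mulfI (lt0r_neq0 s2_gt0)); rewrite -sM muln1 mulr1.
pose t n : R := n%:R `^ a.
have t_mono : {homo t : m n / (m <= n)%N >-> m <= n}.
  by move=> m n mn; apply: ge0_ler_powR; rewrite ?nnegrE ?ler_nat // ltW.
have tM : {morph t : m n / (m * n)%N >-> m * n}.
  by move=> m n; rewrite /t natrM powRM.
have t1 : t 1 = 1 by rewrite /t powR1.
have st2 : s 2 = t 2.
  apply: ln_inj; rewrite ?posrE ?powR_gt0 //.
  by rewrite ln_powR /a divfK ?gt_eqF.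
have s0 : s 0 = 0.
  have : s 0 * (s 2 - 1) = 0 by rewrite mulrBr mulr1 -sM mul0n subrr.
  by move/eqP; rewrite mulf_eq0 subr_eq0 (gt_eqF s2_gt1) orbF => /eqP.
case=> [|n]; first by rewrite s0 powR0 ?gt_eqF.
have sn_gt0 : 0 < s n.+1 by rewrite (lt_le_trans ltr01) // -s1 s_mono.
have tn_gt0 : 0 < t n.+1 by rewrite powR_gt0.
change (s n.+1 = t n.+1); apply/le_anti/andP; split.
  exact: (mono_multiplicative_le _ _ s_mono t_mono sM tM s1 t1 st2 s2_gt0).
by apply: (mono_multiplicative_le _ _ t_mono s_mono tM sM t1 s1); rewrite -?st2.
Qed.

End PowerLaw.

Section Modulus.
Context {R : realType}.
Implicit Types (x : R) (a : R[i]).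

Lemma cabs_ge0 a : 0 <= cabs a.
Proof. by case: a => x y; rewrite /cabs sqrtr_ge0. Qed.

Lemma cabs_cR x : cabs (cR x) = `|x|.
Proof. by rewrite /cabs /cR /= expr0n /= addr0 sqrtr_sqr. Qed.

Lemma cabsN a : cabs (- a) = cabs a.
Proof. exact: normcN. Qed.

Lemma cabsM a b : cabs (a * b) = cabs a * cabs b.
Proof. exact: ComplexField.Normc.normcM. Qed.

Lemma cRM x y : cR (x * y) = cR x * cR y.
Proof. exact: rmorphM. Qed.

End Modulus.

Section DisjointSupport.
Context {R : realType} {N : nat}.
Implicit Types (u v w : 'rV[R[i]]_N).

Lemma disjoint_suppC v w : disjoint_supp v w -> disjoint_supp w v.
Proof. by move=> vw j; case: (vw j); [right | left]. Qed.

Lemma disjoint_suppDl u v w :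
  disjoint_supp u w -> disjoint_supp v w -> disjoint_supp (u + v) w.
Proof.
move=> uw vw j; case: (uw j) => [u0|]; last by right.
by case: (vw j) => [v0|]; [left; rewrite mxE u0 v0 addr0 | right].
Qed.

Lemma disjoint_supp0 v : disjoint_supp v 0.
Proof. by move=> j; right; rewrite mxE. Qed.

Lemma disjoint_supp_delta (a b : R[i]) (i j : 'I_N) :
  i != j -> disjoint_supp (a *: 'e_i) (b *: 'e_j).
Proof.
move=> ij k; rewrite !mxE /=.
case: (eqVneq k i) => [->|]; last by left; rewrite mulr0.
by right; rewrite (negbTE ij) mulr0.
Qed.

End DisjointSupport.

Section Norm.
Context {R : realType} {N : nat} {nrm : 'rV[R[i]]_N -> R}.
Hypothesis nrm_norm : is_norm nrm.
Implicit Types (v w : 'rV[R[i]]_N).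

Lemma eq0_nrm v : nrm v = 0 -> v = 0.
Proof. by case: nrm_norm => + _ _; apply. Qed.

Lemma nrmZ (a : R[i]) v : nrm (a *: v) = cabs a * nrm v.
Proof. by case: nrm_norm => _ + _; apply. Qed.

Lemma ler_nrmD v w : nrm (v + w) <= nrm v + nrm w.
Proof. by case: nrm_norm => _ _; apply. Qed.

Lemma nrm0 : nrm 0 = 0.
Proof. by rewrite -(scale0r 0) nrmZ /cabs ComplexField.Normc.normc0 mul0r. Qed.

Lemma nrmN v : nrm (- v) = nrm v.
Proof. by rewrite -scaleN1r nrmZ cabsN /cabs ComplexField.Normc.normc1 mul1r. Qed.

Lemma nrm_ge0 v : 0 <= nrm v.
Proof. by have := ler_nrmD v (- v); rewrite subrr nrm0 nrmN => ?; lra. Qed.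

Lemma ler_nrm_dist v w : `|nrm v - nrm w| <= nrm (v - w).
Proof.
have := ler_nrmD (v - w) w; have := ler_nrmD (w - v) v.
rewrite !subrK -opprB nrmN ler_norml => ? ?; apply/andP; split; lra.
Qed.

Lemma ler_nrm_sum v : nrm v <= \sum_j cabs (v 0 j) * nrm 'e_j.
Proof.
rewrite {1}(row_sum_delta v); elim/big_ind2: _ => [|? ? ? ? le1 le2|j _].
- by rewrite nrm0.
- exact: le_trans (ler_nrmD _ _) (lerD le1 le2).
- by rewrite nrmZ.
Qed.

End Norm.

Section AbsoluteNorm.
Context {R : realType} {N : nat} (nrm : 'rV[R[i]]_N -> R).
Hypotheses (N3 : (3 <= N)%N) (nrm_norm : is_norm nrm)
           (nrm_perm : perm_invariant nrm).
Hypothesis nrm_disjoint : forall v w : 'rV[R[i]]_N, disjoint_supp v w ->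
  nrm (v + w) = nrm (vec2 N (cR (nrm v)) (cR (nrm w))).
Implicit Types (x y : R) (a b : R[i]) (v w : 'rV[R[i]]_N).

Definition nrm2 x y := nrm (vec2 N (cR x) (cR y)).

Let i0 : 'I_N := Ordinal (leq_trans (isT : (0 < 3)%N) N3).
Let i1 : 'I_N := Ordinal (leq_trans (isT : (1 < 3)%N) N3).
Let i2 : 'I_N := Ordinal N3.

Lemma vec2E a b : vec2 N a b = a *: 'e_i0 + b *: 'e_i1.
Proof.
apply/rowP=> -[[|[|k]] lt_kN]; rewrite !mxE /= ?mulr1 ?mulr0 ?addr0 ?add0r //.
Qed.

Lemma nrm_delta j : nrm 'e_j = 1.
Proof.
have e0_neq0 : nrm 'e_i0 != 0.
  by apply: contra_neq (@oner_neq0 R[i]) => /(eq0_nrm nrm_norm)/rowP/(_ i0);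
     rewrite !mxE eqxx.
have := nrm_disjoint _ _ (disjoint_supp0 'e_i0).
rewrite addr0 (nrm0 nrm_norm) vec2E [cR 0]rmorph0 scale0r addr0.
rewrite (nrmZ nrm_norm) cabs_cR ger0_norm ?(nrm_ge0 nrm_norm) //.
move=> /(congr1 (fun z => z / nrm 'e_i0)).
rewrite mulfK // divff // => /esym e0_1.
rewrite -e0_1 -(nrm_perm (tperm i0 j) 'e_i0); congr nrm; apply/rowP => k.
by rewrite !mxE (canF_eq (tpermK i0 j)) tpermL.
Qed.

Lemma nrmZ_delta a j : nrm (a *: 'e_j) = cabs a.
Proof. by rewrite (nrmZ nrm_norm) nrm_delta mulr1. Qed.

Lemma nrm_disjointE v w : disjoint_supp v w -> nrm (v + w) = nrm2 (nrm v) (nrm w).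
Proof. exact: nrm_disjoint. Qed.

Lemma nrm_delta2 a b : nrm (a *: 'e_i0 + b *: 'e_i1) = nrm2 (cabs a) (cabs b).
Proof. by rewrite nrm_disjointE ?nrmZ_delta //; apply: disjoint_supp_delta. Qed.

Lemma nrm_vec2 a b : nrm (vec2 N a b) = nrm2 (cabs a) (cabs b).
Proof. by rewrite vec2E nrm_delta2. Qed.

Lemma nrm2_abs x y : nrm2 x y = nrm2 `|x| `|y|.
Proof. by rewrite {1}/nrm2 nrm_vec2 !cabs_cR. Qed.

Lemma nrm2_ge0 x y : 0 <= nrm2 x y.
Proof. exact: nrm_ge0. Qed.

Lemma nrm2x0 x : nrm2 x 0 = `|x|.
Proof. by rewrite /nrm2 vec2E [cR 0]rmorph0 scale0r addr0 nrmZ_delta cabs_cR. Qed.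

Lemma nrm20x y : nrm2 0 y = `|y|.
Proof. by rewrite /nrm2 vec2E [cR 0]rmorph0 scale0r add0r nrmZ_delta cabs_cR. Qed.

Lemma ler_nrm2 x y : nrm2 x y <= `|x| + `|y|.
Proof.
have := ler_nrmD nrm_norm (cR x *: 'e_i0) (cR y *: 'e_i1).
by rewrite -vec2E !nrmZ_delta !cabs_cR.
Qed.

(* [2 |x| = nrm (u + w + (u - w)) <= nrm (u + w) + nrm (u - w) = 2 nrm2 x y]. *)
Lemma ler_norm_nrm2 x y : `|x| <= nrm2 x y.
Proof.
pose u : 'rV_N := cR x *: 'e_i0; pose w : 'rV_N := cR y *: 'e_i1.
have := ler_nrmD nrm_norm (u + w) (u - w).
rewrite addrACA subrr addr0 -scalerDl -rmorphD nrmZ_delta cabs_cR -scaleNr.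
rewrite !nrm_delta2 cabsN !cabs_cR -nrm2_abs.
have : `|x + x| = `|x| + `|x| by rewrite -!mulr2n normrMn.
move=> ? ?; lra.
Qed.

Lemma nrm2M t x y : 0 <= t -> nrm2 (t * x) (t * y) = t * nrm2 x y.
Proof.
move=> t_ge0; rewrite /nrm2 !vec2E !cRM -!scalerA -scalerDr (nrmZ nrm_norm).
by rewrite cabs_cR ger0_norm.
Qed.

Lemma nrm2A x y z : 0 <= x -> 0 <= y -> 0 <= z ->
  nrm2 (nrm2 x y) z = nrm2 x (nrm2 y z).
Proof.
move=> x_ge0 y_ge0 z_ge0.
pose X : 'rV_N := cR x *: 'e_i0; pose Y : 'rV_N := cR y *: 'e_i1.
pose Z : 'rV_N := cR z *: 'e_i2.
have XY : disjoint_supp X Y by apply: disjoint_supp_delta.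
have XZ : disjoint_supp X Z by apply: disjoint_supp_delta.
have YZ : disjoint_supp Y Z by apply: disjoint_supp_delta.
have nX : nrm X = x by rewrite nrmZ_delta cabs_cR ger0_norm.
have nY : nrm Y = y by rewrite nrmZ_delta cabs_cR ger0_norm.
have nZ : nrm Z = z by rewrite nrmZ_delta cabs_cR ger0_norm.
rewrite -nX -nY -nZ -!nrm_disjointE -?addrA //.
- by apply/disjoint_suppC/disjoint_suppDl; apply/disjoint_suppC.
- exact: disjoint_suppDl.
Qed.

(* [ones n] plays the role of the norm of a vector of [n] ones, which by the
   associativity of [nrm2] makes sense even when [n > N]. *)
Definition ones n := iter n (nrm2^~ 1) 0.

Lemma onesS n : ones n.+1 = nrm2 (ones n) 1.
Proof. by []. Qed.

Lemma ones_ge0 n : 0 <= ones n.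
Proof. by case: n => [|n]; rewrite ?onesS ?nrm2_ge0. Qed.

Lemma ones1 : ones 1 = 1.
Proof. by rewrite onesS nrm20x normr1. Qed.

Lemma ones2 : ones 2 = nrm2 1 1.
Proof. by rewrite onesS ones1. Qed.

Lemma onesD m n : ones (m + n) = nrm2 (ones m) (ones n).
Proof.
elim: n => [|n IHn]; first by rewrite addn0 nrm2x0 ger0_norm ?ones_ge0.
by rewrite addnS !onesS IHn nrm2A ?ones_ge0.
Qed.

Lemma onesM m n : ones (m * n) = ones m * ones n.
Proof.
elim: n => [|n IHn]; first by rewrite muln0 mulr0.
by rewrite mulnS addnC onesD IHn onesS -{2}(mulr1 (ones m)) nrm2M ?ones_ge0.
Qed.

Lemma ones_mono : {homo ones : m n / (m <= n)%N >-> m <= n}.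
Proof.
move=> m n /subnKC <-; elim: (n - m)%N => [|d IHd]; first by rewrite addn0.
by rewrite addnS onesS (le_trans IHd) // -[leLHS]ger0_norm ?ones_ge0 ?ler_norm_nrm2.
Qed.

Lemma onesS_le n : ones n.+1 <= ones n + 1.
Proof. by rewrite onesS (le_trans (ler_nrm2 _ _)) // normr1 ger0_norm ?ones_ge0. Qed.

Lemma onesD_le m n : ones (m + n) <= ones m + n%:R.
Proof.
elim: n => [|n IHn]; first by rewrite addn0 addr0.
by rewrite addnS (le_trans (onesS_le _)) // -natr1 addrA lerD2r.
Qed.

Definition take_row k v : 'rV[R[i]]_N := \row_j (if (j < k)%N then v 0 j else 0).

Lemma nrm_take_row0 v : nrm (take_row 0 v) = 0.
Proof.
by rewrite -(nrm0 nrm_norm); congr nrm; apply/rowP => j; rewrite !mxE.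
Qed.

Lemma take_rowN v : take_row N v = v.
Proof. by apply/rowP => j; rewrite mxE ltn_ord. Qed.

Lemma nrm_take_rowS v k (lt_kN : (k < N)%N) :
  nrm (take_row k.+1 v) = nrm2 (nrm (take_row k v)) (cabs (v 0 (Ordinal lt_kN))).
Proof.
set K := Ordinal lt_kN.
have -> : take_row k.+1 v = take_row k v + v 0 K *: 'e_K.
  apply/rowP => j; rewrite !mxE eqxx /= -val_eqE /= ltnS.
  case: ltngtP => [jk|kj|jk]; rewrite ?mulr0 ?addr0 //.
  by rewrite (_ : j = K) ?mulr1 ?add0r //; apply: val_inj.
rewrite nrm_disjointE ?nrmZ_delta // => j.
rewrite !mxE; case: (eqVneq j K) => [->|]; first by left; rewrite ltnn.
by right; rewrite mulr0.
Qed.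

Lemma nrm_eq_cabs v w :
  (forall j, cabs (v 0 j) = cabs (w 0 j)) -> nrm v = nrm w.
Proof.
move=> vw; suff take_eq k : (k <= N)%N -> nrm (take_row k v) = nrm (take_row k w).
  by rewrite -(take_rowN v) -(take_rowN w) take_eq.
elim: k => [|k IHk] lt_kN; first by rewrite !nrm_take_row0.
by rewrite !(nrm_take_rowS _ _ lt_kN) IHk ?vw // ltnW.
Qed.

Lemma nrm_row_ones (n : 'I_N -> nat) :
  nrm (\row_j cR (ones (n j))) = ones (\sum_j n j).
Proof.
set u := \row_j _.
suff take_ones k : (k <= N)%N ->
    nrm (take_row k u) = ones (\sum_(j < N | (j < k)%N) n j).
  rewrite -(take_rowN u) take_ones //; congr ones.
  by apply: eq_bigl => j; rewrite ltn_ord.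
elim: k => [|k IHk] lt_kN.
  by rewrite nrm_take_row0 big_pred0 // => j; rewrite ltn0.
rewrite (nrm_take_rowS _ _ lt_kN) IHk ?(ltnW lt_kN) //.
rewrite mxE cabs_cR ger0_norm ?ones_ge0 //.
rewrite [in RHS](bigD1 (Ordinal lt_kN)) //= addnC onesD; congr (nrm2 (ones _) _).
by apply: eq_bigl => j; rewrite -val_eqE /= [(j < k.+1)%N]ltnS andbC -ltn_neqAle.
Qed.

Lemma ler_nrm_cabs v : nrm v <= \sum_j cabs (v 0 j).
Proof.
rewrite (le_trans (ler_nrm_sum nrm_norm v)) //.
by under eq_bigr do rewrite nrm_delta mulr1.
Qed.

Lemma nrm_row_cabs v : nrm v = nrm (\row_j cR (cabs (v 0 j))).
Proof. by apply: nrm_eq_cabs => j; rewrite mxE cabs_cR ger0_norm ?cabs_ge0. Qed.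

Lemma ler_nrm_row_dist (a b : 'I_N -> R) :
  `|nrm (\row_j cR (a j)) - nrm (\row_j cR (b j))| <= \sum_j `|a j - b j|.
Proof.
rewrite (le_trans (ler_nrm_dist nrm_norm _ _)) // (le_trans (ler_nrm_cabs _)) //.
by apply: ler_sum => j _; rewrite !mxE -rmorphB cabs_cR.
Qed.

Hypothesis nrm11_neq1 : nrm (vec2 N 1 1) != 1.

Definition ones_exponent := ln (nrm2 1 1) / ln 2.
Local Notation alpha := ones_exponent.

Lemma nrm2_11_gt1 : 1 < nrm2 1 1.
Proof.
have := ler_norm_nrm2 1 1; rewrite normr1 le_eqVlt => /predU1P[e|//].
by move: nrm11_neq1; rewrite nrm_vec2 /cabs ComplexField.Normc.normc1 -e eqxx.
Qed.

Lemma ones_powR n : ones n = n%:R `^ alpha.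
Proof.
by rewrite /alpha -ones2; apply: mono_multiplicative_powR;
  [exact: ones_mono | exact: onesM | rewrite ones2 nrm2_11_gt1].
Qed.

Lemma ones_exponent_gt0 : 0 < alpha.
Proof. by rewrite divr_gt0 ?ln_gt0 ?nrm2_11_gt1 ?ltr1n. Qed.

Lemma ones_exponent_le1 : alpha <= 1.
Proof.
have ln2_gt0 : 0 < ln (2 : R) by rewrite ln_gt0 ?ltr1n.
rewrite ler_pdivrMr // mul1r ler_ln ?posrE ?(lt_trans ltr01 nrm2_11_gt1) //.
by have := ler_nrm2 1 1; rewrite normr1.
Qed.

Lemma powRK_ones_exponent x : 0 <= x -> (x `^ alpha^-1) `^ alpha = x.
Proof.
by move=> x_ge0; rewrite -powRrM mulVf ?powRr1 ?gt_eqF ?ones_exponent_gt0.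
Qed.

Lemma ones_truncn_powR x : 0 <= x ->
  ones (Num.truncn (x `^ alpha^-1)) <= x <= ones (Num.truncn (x `^ alpha^-1)) + 1.
Proof.
move=> x_ge0; set n := Num.truncn _.
have /andP[le_nx lt_xn] := truncn_itv (powR_ge0 x alpha^-1).
have powR_mono := ge0_ler_powR (ltW ones_exponent_gt0).
rewrite -(powRK_ones_exponent _ x_ge0); apply/andP; split.
  by rewrite ones_powR powR_mono ?nnegrE ?powR_ge0.
by rewrite (le_trans _ (onesS_le n)) // ones_powR powR_mono ?nnegrE ?powR_ge0 ?ltW.
Qed.

Lemma ones_sum_approx (y : 'I_N -> R) (n : 'I_N -> nat) :
  (forall j, (n j)%:R <= y j < (n j).+1%:R) ->
  ones (\sum_j n j) <= (\sum_j y j) `^ alpha <= ones (\sum_j n j) + N%:R.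
Proof.
move=> ny; have powR_mono := ge0_ler_powR (ltW ones_exponent_gt0).
have sum_n_ge0 : 0 <= (\sum_j n j)%:R :> R by [].
have sum_le : (\sum_j n j)%:R <= \sum_j y j.
  by rewrite natr_sum; apply: ler_sum => j _; case/andP: (ny j).
have le_sum : \sum_j y j <= (\sum_j n j + N)%:R.
  rewrite natrD natr_sum -[N in N%:R]card_ord -sumr_const -big_split /=.
  by apply: ler_sum => j _; case/andP: (ny j) => _ /ltW; rewrite -natr1.
apply/andP; split; first by rewrite ones_powR powR_mono ?nnegrE ?(le_trans sum_n_ge0).
rewrite (le_trans _ (onesD_le _ N)) // ones_powR.
by rewrite powR_mono ?nnegrE ?ler0n ?(le_trans sum_n_ge0).
Qed.

(* Rounding [M |v_j|] down to values of [ones] turns both sides into [ones S]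
   for the same [S], up to an error independent of [M]. *)
Lemma nrm_scaled_approx v (M : R) : 0 <= M ->
  `|M * nrm v - M * (\sum_j cabs (v 0 j) `^ alpha^-1) `^ alpha| <= N%:R *+ 2.
Proof.
move=> M_ge0; have Mv_ge0 j : 0 <= M * cabs (v 0 j) by rewrite mulr_ge0 ?cabs_ge0.
pose n j := Num.truncn ((M * cabs (v 0 j)) `^ alpha^-1).
have near_ones j := ones_truncn_powR _ (Mv_ge0 j).
have nrm_near : `|M * nrm v - ones (\sum_j n j)| <= N%:R.
  have -> : M * nrm v = nrm (cR M *: v) by rewrite (nrmZ nrm_norm) cabs_cR ger0_norm.
  rewrite -nrm_row_ones nrm_row_cabs (le_trans (ler_nrm_row_dist _ _)) //.
  rewrite -[N in N%:R]card_ord -sumr_const; apply: ler_sum => j _.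
  rewrite mxE cabsM cabs_cR [`|M|]ger0_norm //.
  by case/andP: (near_ones j) => ? ?; rewrite ler_norml; apply/andP; split; lra.
have lp_scaled : M * (\sum_j cabs (v 0 j) `^ alpha^-1) `^ alpha
    = (\sum_j (M * cabs (v 0 j)) `^ alpha^-1) `^ alpha.
  rewrite -[in LHS](powRK_ones_exponent _ M_ge0) -powRM ?powR_ge0 //; last first.
    by rewrite sumr_ge0 // => j _; rewrite powR_ge0.
  by rewrite mulr_sumr; under eq_bigr do rewrite -powRM ?cabs_ge0 //.
have lp_near : ones (\sum_j n j) <= M * (\sum_j cabs (v 0 j) `^ alpha^-1) `^ alpha
    <= ones (\sum_j n j) + N%:R.
  by rewrite lp_scaled; apply: ones_sum_approx => j; apply/truncn_itv/powR_ge0.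
rewrite -(subrK (ones (\sum_j n j)) (M * nrm v)) -addrA mulr2n.
rewrite (le_trans (ler_normD _ _)) // lerD // ler_norml.
by case/andP: lp_near => ? ?; apply/andP; split; lra.
Qed.

Lemma nrm_lp v : nrm v = (\sum_j cabs (v 0 j) `^ alpha^-1) `^ alpha.
Proof.
apply/eqP; rewrite -subr_eq0 -normr_le0.
apply: (@le0_of_bounded_mulrn _ _ (N%:R *+ 2)) => k.
by rewrite -normrMn -[_ *+ k]mulr_natl mulrBr nrm_scaled_approx.
Qed.

End AbsoluteNorm.

Theorem theorem6 (R : realType) (N : nat) (nrm : 'rV[R[i]]_N -> R) :
  (3 <= N)%N ->
  is_norm nrm ->
  perm_invariant nrm ->
  nrm (vec2 N 1 1) != 1 ->
  (forall v w : 'rV[R[i]]_N, disjoint_supp v w ->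
     nrm (v + w) = nrm (vec2 N (cR (nrm v)) (cR (nrm w)))) ->
  exists p : R, 1 <= p /\
    forall c : 'rV[R[i]]_N, (forall j, is_rat (cabs (c 0 j))) ->
      nrm c = (\sum_(j < N) (cabs (c 0 j)) `^ p) `^ p^-1.
Proof.
move=> N3 nrm_norm nrm_perm nrm11_neq1 nrm_disjoint.
have alpha_gt0 := ones_exponent_gt0 nrm N3 nrm_norm nrm_perm nrm_disjoint nrm11_neq1.
exists (ones_exponent nrm)^-1; split.
  by rewrite invf_ge1 ?(ones_exponent_le1 nrm N3 nrm_norm nrm_perm nrm_disjoint).
by move=> c _; rewrite invrK (nrm_lp nrm N3 nrm_norm nrm_perm nrm_disjoint nrm11_neq1).
Qed.
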